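(* For every odd $k\ge3$ there exists a finite connected $k$-regular simple graph that is not isomorphic to $\mathrm{Sch}(G/H;S)$ for any group $G$, subgroup $H\le G$, and symmetric generating set $S\subseteq G$ with $e\notin S$.
   Context: For a group $G$ and a symmetric generating set $S$ with $e\notin S$, the Cayley graph $\mathrm{Cay}(G;S)$ has vertex set $G$ and edges $\{g,sg\}$, $g\in G$, $s\in S$; $G$ acts on it from the right by $\{y_1,y_2\}.h=\{y_1h,y_2h\}$. For $H\le G$, the Schreier graph $\mathrm{Sch}(G/H;S)$ is the multigraph whose vertices are the left cosets $gH$ and whose (multi)edges are the $H$-orbits $\{\{y_1h,y_2h\}:h\in H\}$ of edges of $\mathrm{Cay}(G;S)$, such an orbit joining $y_1H$ and $y_2H$ (loops and multiple edges allowed). Isomorphism is isomorphism of multigraphs. *)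

From mathcomp Require Import all_boot.
Set Implicit Arguments. Unset Strict Implicit. Unset Printing Implicit Defensive.

Section Groups.
Variables (G : Type) (mul : G -> G -> G) (e : G) (inv : G -> G).

Definition is_group : Prop :=
  (forall x y z, mul x (mul y z) = mul (mul x y) z) /\
  (forall x, mul e x = x /\ mul x e = x) /\
  (forall x, mul (inv x) x = e /\ mul x (inv x) = e).

Definition is_subgroup (H : G -> Prop) : Prop :=
  H e /\ (forall x y, H x -> H y -> H (mul x y)) /\ (forall x, H x -> H (inv x)).

Definition generates (S : G -> Prop) : Prop :=
  forall K : G -> Prop, is_subgroup K -> (forall s, S s -> K s) -> forall g, K g.

Variables (H : G -> Prop) (S : G -> Prop).

(* vertices of Sch(G/H;S): elements of G up to "same left coset" *)
Definition same_coset (g g' : G) : Prop := H (mul (inv g) g').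

(* a pair (y1,y2) represents the Cayley edge {y1, s y1} with s = y2 y1^-1 in S *)
Definition cay_edge (p : G * G) : Prop := S (mul p.2 (inv p.1)).

(* two Cayley edges (as unordered pairs) lie in the same H-orbit under the
   right action {y1,y2}.h = {y1 h, y2 h} *)
Definition same_orbit (p q : G * G) : Prop :=
  exists h, H h /\
    ((q.1 = mul p.1 h /\ q.2 = mul p.2 h) \/ (q.1 = mul p.2 h /\ q.2 = mul p.1 h)).

Definition sch_joins (p : G * G) (a b : G) : Prop :=
  (same_coset p.1 a /\ same_coset p.2 b) \/ (same_coset p.1 b /\ same_coset p.2 a).

(* the simple graph (V, adj) is isomorphic, as a multigraph, to Sch(G/H;S):
   phi induces a bijection V -> G/H, psi a bijection from the (unordered)
   edges of (V, adj) onto the H-orbits of Cayley edges, and psi respects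
   incidence. *)
Definition schreier_iso (V : finType) (adj : rel V) : Prop :=
  exists (phi : V -> G) (psi : V -> V -> G * G),
    (forall g, exists v, same_coset (phi v) g) /\
    (forall u v, same_coset (phi u) (phi v) -> u = v) /\
    (forall u v, adj u v -> cay_edge (psi u v)) /\
    (forall u v, adj u v -> same_orbit (psi u v) (psi v u)) /\
    (forall p, cay_edge p -> exists u v, adj u v /\ same_orbit (psi u v) p) /\
    (forall u v u' v', adj u v -> adj u' v' -> same_orbit (psi u v) (psi u' v') ->
        (u = u' /\ v = v') \/ (u = v' /\ v = u')) /\
    (forall u v, adj u v -> sch_joins (psi u v) (phi u) (phi v)).

End Groups.

From mathcomp Require Import all_boot.
From Stdlib Require Import ClassicalEpsilon.
Set Implicit Arguments. Unset Strict Implicit. Unset Printing Implicit Defensive.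

(* Read from u, an edge uv of a Schreier graph carries a label s in S (the
   Cayley edges {y, s y} with y in the coset of u), and s^-1 when read from v;
   at every vertex each s in S labels exactly one edge.  At a vertex of odd
   degree, s |-> s^-1 is therefore an involution of an odd set of labels, so
   some s in S satisfies s = s^-1, and the s-labelled edges form a perfect
   matching.  It thus suffices to build a connected k-regular graph without a
   perfect matching: a hub joined to k blocks of odd size. *)

Lemma involution_fixpoint (T : finType) (f : T -> T) (A : {set T}) :
  {in A, forall x, f x \in A} -> {in A, cancel f f} -> odd #|A| ->
  exists2 x, x \in A & f x = x.
Proof.
elim: {A}_.+1 {-2}A (ltnSn #|A|) => // n IH A leA Af fK oddA.
have [x xA] : exists x, x \in A.
  by apply/set0Pn; apply: contraTneq oddA => ->; rewrite cards0.
have [fxx|fx_neq] := eqVneq (f x) x; first by exists x.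
pose A' := A :\ x :\ f x.
have cardA : #|A| = #|A'|.+2.
  by rewrite (cardsD1 x A) (cardsD1 (f x) (A :\ x)) xA !inE fx_neq Af.
have [y] : exists2 y, y \in A' & f y = y.
  apply: IH.
  - by rewrite -ltnS -cardA ltnW.
  - move=> y; rewrite !inE => /and3P[yfx yx yA]; rewrite Af // andbT.
    apply/andP; split; apply/eqP => fyE.
    + by move/eqP: yx; apply; rewrite -(fK y yA) fyE fK.
    + by move/eqP: yfx; apply; rewrite -(fK y yA) fyE.
  - by move=> y; rewrite !inE => /and3P[_ _ /fK].
  - by move: oddA; rewrite cardA /= negbK.
by rewrite !inE => /and3P[_ _ yA] fy; exists y.
Qed.

Section SchreierGraphs.
Variables (G : Type) (mul : G -> G -> G) (e : G) (inv : G -> G).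
Hypothesis G_group : is_group mul e inv.
Variable H : G -> Prop.
Hypothesis H_subgroup : is_subgroup mul e inv H.

Local Notation coset_rel := (same_coset mul inv H).
Local Notation orbit_rel := (same_orbit mul H).

Lemma mulgA x y z : mul x (mul y z) = mul (mul x y) z.
Proof. by case: G_group => A _; apply: A. Qed.
Lemma mul1g x : mul e x = x.
Proof. by case: G_group => _ [one _]; case: (one x). Qed.
Lemma mulg1 x : mul x e = x.
Proof. by case: G_group => _ [one _]; case: (one x). Qed.
Lemma mulVg x : mul (inv x) x = e.
Proof. by case: G_group => _ [_ V]; case: (V x). Qed.
Lemma mulgV x : mul x (inv x) = e.
Proof. by case: G_group => _ [_ V]; case: (V x). Qed.

Lemma mulKg x y : mul (inv x) (mul x y) = y.
Proof. by rewrite mulgA mulVg mul1g. Qed.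
Lemma mulgKV x y : mul (mul y (inv x)) x = y.
Proof. by rewrite -mulgA mulVg mulg1. Qed.
Lemma mulgK x y : mul (mul y x) (inv x) = y.
Proof. by rewrite -mulgA mulgV mulg1. Qed.
Lemma mulIg x : injective (mul^~ x).
Proof. by move=> y z /(congr1 (mul^~ (inv x))) /=; rewrite !mulgK. Qed.

Lemma invg_uniq x y : mul x y = e -> inv x = y.
Proof. by move=> xy; rewrite -(mulg1 (inv x)) -xy mulKg. Qed.
Lemma invgK x : inv (inv x) = x.
Proof. exact/invg_uniq/mulVg. Qed.
Lemma invMg x y : inv (mul x y) = mul (inv y) (inv x).
Proof. by apply: invg_uniq; rewrite -mulgA (mulgA y) mulgV mul1g mulgV. Qed.

Lemma group1 : H e.
Proof. by case: H_subgroup. Qed.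
Lemma groupM x y : H x -> H y -> H (mul x y).
Proof. by case: H_subgroup => _ [M _]; apply: M. Qed.
Lemma groupV x : H x -> H (inv x).
Proof. by case: H_subgroup => _ [_ V]; apply: V. Qed.

Lemma coset_refl a : coset_rel a a.
Proof. by rewrite /same_coset mulVg; exact: group1. Qed.
Lemma coset_sym a b : coset_rel a b -> coset_rel b a.
Proof. by rewrite /same_coset => /groupV; rewrite invMg invgK. Qed.
Lemma coset_trans a b c : coset_rel a b -> coset_rel b c -> coset_rel a c.
Proof.
by rewrite /same_coset => ab /(groupM ab); rewrite -mulgA (mulgA b) mulgV mul1g.
Qed.
Lemma coset_mulr a h : H h -> coset_rel a (mul a h).
Proof. by rewrite /same_coset mulKg. Qed.

Lemma orbit_mul y1 y2 h : H h -> orbit_rel (y1, y2) (mul y1 h, mul y2 h).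
Proof. by move=> Hh; exists h; split => //; left. Qed.
Lemma orbit_refl p : orbit_rel p p.
Proof. by case: p => y1 y2; have := orbit_mul y1 y2 group1; rewrite !mulg1. Qed.
Lemma orbit_swap p : orbit_rel p (p.2, p.1).
Proof. by exists e; split; [exact: group1 | right; rewrite !mulg1]. Qed.
Lemma orbit_sym p q : orbit_rel p q -> orbit_rel q p.
Proof.
case: p q => [p1 p2] [q1 q2] [h [Hh [[/= -> ->]|[/= -> ->]]]];
  by exists (inv h); split; [exact: groupV | rewrite /= -!mulgA !mulgV !mulg1; tauto].
Qed.
Lemma orbit_trans p q r : orbit_rel p q -> orbit_rel q r -> orbit_rel p r.
Proof.
case: p q r => [p1 p2] [q1 q2] [r1 r2] [h [Hh pq]] [h' [Hh' qr]].
exists (mul h h'); split; first exact: groupM.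
by case: qr => -[/= -> ->]; case: pq => -[/= -> ->]; rewrite -!mulgA; tauto.
Qed.

Lemma sch_joins_orbit p q a b :
  orbit_rel p q -> sch_joins mul inv H p a b -> sch_joins mul inv H q a b.
Proof.
case: p q => [p1 p2] [q1 q2] [h [Hh qE]].
have mulr_coset x c : coset_rel x c -> coset_rel (mul x h) c.
  exact/coset_trans/coset_sym/coset_mulr.
rewrite /sch_joins /=; case: qE => -[/= -> ->] [] [pa pb];
  by [left; split; exact: mulr_coset | right; split; exact: mulr_coset].
Qed.

Section Labels.
Variable S : G -> Prop.
Hypothesis S_sym : forall s, S s -> S (inv s).
Variables (V : finType) (adj : rel V).
Hypotheses (adj_sym : symmetric adj) (adj_irr : irreflexive adj).
Variables (phi : V -> G) (psi : V -> V -> G * G).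
Hypothesis phi_inj : forall u v, coset_rel (phi u) (phi v) -> u = v.
Hypothesis psi_cay : forall u v, adj u v -> cay_edge mul inv S (psi u v).
Hypothesis psi_sym : forall u v, adj u v -> orbit_rel (psi u v) (psi v u).
Hypothesis psi_onto :
  forall p, cay_edge mul inv S p -> exists u v, adj u v /\ orbit_rel (psi u v) p.
Hypothesis psi_inj : forall u v u' v', adj u v -> adj u' v' ->
  orbit_rel (psi u v) (psi u' v') -> (u = u' /\ v = v') \/ (u = v' /\ v = u').
Hypothesis psi_joins :
  forall u v, adj u v -> sch_joins mul inv H (psi u v) (phi u) (phi v).

Definition sch_label u v s := adj u v /\ exists y,
  [/\ coset_rel (phi u) y, coset_rel (phi v) (mul s y) & orbit_rel (psi u v) (y, mul s y)].

Lemma sch_label_of_edge u v : adj u v -> exists2 s, S s & sch_label u v s.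
Proof.
move=> uv; have := psi_joins uv; have := psi_cay uv.
rewrite /cay_edge /sch_joins /sch_label.
case: (psi u v) => [q1 q2] /= Sq [[uq1 vq2]|[vq1 uq2]].
- exists (mul q2 (inv q1)) => //; split=> //; exists q1.
  by rewrite mulgKV; split; [exact: coset_sym | exact: coset_sym | exact: orbit_refl].
- exists (mul q1 (inv q2)); first by have := S_sym Sq; rewrite invMg invgK.
  split=> //; exists q2.
  by rewrite mulgKV; split; [exact: coset_sym | exact: coset_sym | exact: orbit_swap].
Qed.

Lemma sch_label_at_vertex u s : S s -> exists v, sch_label u v s.
Proof.
move=> Ss; have [|u' [v' [uv' psi_uv']]] := psi_onto (p := (phi u, mul s (phi u))).
  by rewrite /cay_edge /= mulgK.
have := sch_joins_orbit psi_uv' (psi_joins uv'); rewrite /sch_joins /=.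
case=> [[/phi_inj uE sv']|[/phi_inj uE su']]; [subst u' | subst v'].
- by exists v'; split=> //; exists (phi u); split=> //; [exact: coset_refl | exact: coset_sym].
- exists u'; split; first by rewrite adj_sym.
  exists (phi u); split; [exact: coset_refl | exact: coset_sym |].
  exact: orbit_trans (orbit_sym (psi_sym uv')) psi_uv'.
Qed.

Lemma sch_label_inv u v s : sch_label u v s -> sch_label v u (inv s).
Proof.
case=> uv [y [uy vsy psi_uv]]; split; first by rewrite adj_sym.
exists (mul s y); rewrite mulKg; split=> //.
exact: orbit_trans (orbit_sym (psi_sym uv)) (orbit_trans psi_uv (orbit_swap _)).
Qed.

(* Two representatives of the same orbit differ by right multiplication,
   forcing s = t, or by a swap, which would make uv a loop. *)
Lemma sch_label_uniq u v s t : sch_label u v s -> sch_label u v t -> s = t.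
Proof.
case=> uv [y [uy vsy psi_uv]] [_ [y' [uy' vty' psi_uv']]].
have [h [Hh [[/= y'E ty'E]|[/= y'E ty'E]]]] := orbit_trans (orbit_sym psi_uv) psi_uv'.
  by apply/esym/(@mulIg (mul y h)); rewrite -y'E ty'E y'E mulgA.
suff /phi_inj uvE : coset_rel (phi u) (phi v) by rewrite uvE adj_irr in uv.
apply: coset_trans uy' _; rewrite y'E; apply: coset_sym.
exact: coset_trans vsy (coset_mulr _ Hh).
Qed.

Lemma sch_label_nb_uniq u v w s : sch_label u v s -> sch_label u w s -> v = w.
Proof.
case=> uv [y [uy vsy psi_uv]] [uw [y' [uy' wsy' psi_uw]]].
have yy' : H (mul (inv y) y') := coset_trans (coset_sym uy) uy'.
have : orbit_rel (psi u v) (psi u w).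
  apply: orbit_trans psi_uv (orbit_trans _ (orbit_sym psi_uw)).
  by have := orbit_mul y (mul s y) yy'; rewrite -mulgA !(mulgA y) mulgV mul1g.
by case/(psi_inj uv uw) => -[// uw_eq vw]; rewrite -uw_eq -vw adj_irr in uw.
Qed.

Lemma sch_nb_exists s u : exists v, S s -> sch_label u v s.
Proof.
have [Ss|nSs] := classic (S s); last by exists u.
by have [v uv] := sch_label_at_vertex u Ss; exists v.
Qed.

Lemma edge_label_exists u v : exists s, adj u v -> S s /\ sch_label u v s.
Proof.
have [uv|_] := boolP (adj u v); last by exists e.
by have [s Ss l] := sch_label_of_edge uv; exists s.
Qed.

(* The other end of the s-labelled edge at u; junk unless S s. *)
Definition sch_nb s u : V :=
  proj1_sig (constructive_indefinite_description _ (sch_nb_exists s u)).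
Definition edge_label u v : G :=
  proj1_sig (constructive_indefinite_description _ (edge_label_exists u v)).

Lemma sch_nbP s u : S s -> sch_label u (sch_nb s u) s.
Proof. exact: proj2_sig (constructive_indefinite_description _ (sch_nb_exists s u)). Qed.

Lemma edge_labelP u v : adj u v -> S (edge_label u v) /\ sch_label u v (edge_label u v).
Proof. exact: proj2_sig (constructive_indefinite_description _ (edge_label_exists u v)). Qed.

Lemma adj_sch_nb s u : S s -> adj u (sch_nb s u).
Proof. by case/(sch_nbP u). Qed.
Lemma sch_nbK s u : S s -> sch_nb (inv s) (sch_nb s u) = u.
Proof.
move=> Ss; apply/esym/(sch_label_nb_uniq (sch_label_inv (sch_nbP u Ss))).
exact/sch_nbP/S_sym.
Qed.
Lemma edge_labelK u v : adj u v -> sch_nb (edge_label u v) u = v.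
Proof.
by case/edge_labelP=> Ss uvs; apply/esym/(sch_label_nb_uniq uvs)/sch_nbP.
Qed.
Lemma edge_label_nb s u : S s -> edge_label u (sch_nb s u) = s.
Proof.
move=> Ss; have [_ l] := edge_labelP (adj_sch_nb u Ss).
exact: sch_label_uniq l (sch_nbP u Ss).
Qed.

Lemma odd_degree_involution c :
  odd #|[set w | adj c w]| -> exists2 s, S s & inv s = s.
Proof.
pose f v := sch_nb (inv (edge_label c v)) c.
have Sf v : adj c v -> S (inv (edge_label c v)) by case/edge_labelP => /S_sym.
have f_in : {in [set w | adj c w], forall v, f v \in [set w | adj c w]}.
  by move=> v; rewrite !inE => /Sf/adj_sch_nb.
have fK : {in [set w | adj c w], cancel f f}.
  move=> v; rewrite inE => cv.
  by rewrite /f edge_label_nb ?invgK ?edge_labelK //; exact: Sf.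
move=> odd_c; have [v] := involution_fixpoint f_in fK odd_c.
rewrite inE => cv fv; exists (edge_label c v); first by case: (edge_labelP cv).
by rewrite -{2}fv /f edge_label_nb //; exact: Sf.
Qed.

Lemma odd_degree_perfect_matching c : odd #|[set w | adj c w]| ->
  exists M : V -> V, (forall u, adj u (M u)) /\ involutive M.
Proof.
case/odd_degree_involution=> s Ss sV; exists (sch_nb s).
by split=> u; [exact: adj_sch_nb | rewrite -{1}sV sch_nbK].
Qed.

End Labels.

Lemma schreier_odd_degree_matching (S : G -> Prop) (V : finType) (adj : rel V) c :
  (forall s, S s -> S (inv s)) -> symmetric adj -> irreflexive adj ->
  schreier_iso mul inv H S adj -> odd #|[set w | adj c w]| ->
  exists M : V -> V, (forall u, adj u (M u)) /\ involutive M.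
Proof.
move=> S_sym adj_sym adj_irr
  [phi [psi [_ [phi_inj [psi_cay [psi_sym [psi_onto [psi_inj psi_joins]]]]]]]].
exact: (odd_degree_perfect_matching S_sym adj_sym adj_irr phi_inj psi_cay psi_sym
  psi_onto psi_inj psi_joins).
Qed.

End SchreierGraphs.

Lemma card_set_option (T : finType) (P : pred (option T)) :
  #|[set w | P w]| = P None + #|[set t | P (Some t)]|.
Proof.
rewrite (cardsD1 None) inE -(card_imset [set t | P (Some t)] (@Some_inj _)).
congr (_ + _); apply: eq_card => -[t|]; rewrite !inE.
  by rewrite mem_imset ?inE //; exact: Some_inj.
by apply/esym/imsetP => -[].
Qed.

(* For k = 2m+1: a hub [None] joined to k blocks [Some (i, _)]; block i is a
   vertex [Some (i, None)] joined to the 2m matched vertices of K_{2m+2} minus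
   a matching of size m, whose vertices form the type [gadget]. *)
Section OddRegularGraph.
Variable m : nat.

Definition gadget := (bool * option 'I_m)%type.

Definition mate (x : gadget) : gadget := if x.2 is Some _ then (~~ x.1, x.2) else x.

Lemma mateK : involutive mate.
Proof. by case=> b [t|]; rewrite /mate /= ?negbK. Qed.

Lemma mate_neq x : (x != mate x) = (x.2 != None).
Proof. by case: x => -[] [t|]. Qed.

Definition block_adj (o o' : option gadget) : bool :=
  match o, o' with
  | None, None => false
  | None, Some x | Some x, None => x.2 != None
  | Some x, Some y => (y != x) && (y != mate x)
  end.

Definition vertex := option ('I_m.*2.+1 * option gadget).

Definition adjacent (u v : vertex) : bool :=
  match u, v with
  | None, None => false
  | None, Some (_, o) | Some (_, o), None => o == None
  | Some (i, o), Some (i', o') => (i == i') && block_adj o o'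
  end.

Lemma adjacent_sym : symmetric adjacent.
Proof.
move=> [[i [x|]]|] [[i' [y|]]|] //=; rewrite eq_sym //.
by rewrite (eq_sym x y) (eq_sym x (mate y)) (can2_eq mateK mateK).
Qed.

Lemma adjacent_irr : irreflexive adjacent.
Proof. by move=> [[i [x|]]|] //=; rewrite !eqxx ?andbF. Qed.

Lemma card_matched : #|[set x : gadget | x.2 != None]| = m.*2.
Proof.
have -> : [set x : gadget | x.2 != None] = setX [set: bool] (Some @: [set: 'I_m]).
  apply/setP => -[b [t|]]; rewrite !inE /=; last by apply/esym/imsetP => -[].
  by rewrite mem_imset ?inE //; exact: Some_inj.
by rewrite cardsX cardsT card_bool card_imset ?cardsT ?card_ord ?mul2n //; exact: Some_inj.
Qed.

Lemma adjacent_degree v : #|[set w | adjacent v w]| = m.*2.+1.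
Proof.
rewrite card_set_option; case: v => [[i o]|] /=; last first.
  have -> : [set p | adjacent None (Some p)] = setX [set: 'I_m.*2.+1] [set None].
    by apply/setP => -[i o]; rewrite !inE.
  by rewrite cardsX cardsT card_ord cards1 muln1.
have -> : [set p | adjacent (Some (i, o)) (Some p)] = setX [set i] [set o' | block_adj o o'].
  by apply/setP => -[i' o']; rewrite !inE eq_sym.
rewrite cardsX cards1 mul1n card_set_option; case: o => [x|] /=; last by rewrite card_matched.
have -> : [set y | (y != x) && (y != mate x)] = ~: [set x; mate x].
  by apply/setP => y; rewrite !inE negb_or.
have := cardsC [set x; mate x]; rewrite cards2 card_prod card_bool card_option card_ord.
rewrite mate_neq mulnS mul2n.
by case: (x.2 != None) => /eqP; rewrite ?add0n ?add1n ?add2n ?eqSS => /eqP ->.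
Qed.

Hypothesis m_gt0 : 0 < m.

Lemma connect_hub v : connect adjacent v None.
Proof.
have block_hub i : connect adjacent (Some (i, None)) None by exact: connect1.
have matched_hub i x : x.2 != None -> connect adjacent (Some (i, Some x)) None.
  by move=> xm; apply: connect_trans (block_hub i); apply: connect1; rewrite /= eqxx.
case: v => [[i [[b [t|]]|]]|]; [exact: matched_hub | | exact: block_hub | exact: connect0].
apply: connect_trans (matched_hub i (b, Some (Ordinal m_gt0)) isT).
by apply: connect1; rewrite /= /mate /= eqxx andbb; apply/eqP => -[].
Qed.

Lemma adjacent_connect u v : connect adjacent u v.
Proof.
apply: connect_trans (connect_hub u) _.
by rewrite (sym_connect_sym adjacent_sym) connect_hub.
Qed.

(* M matches the hub with one block; every other block is closed under M and
   has the odd number 2m+3 of vertices. *)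
Lemma no_perfect_matching (M : vertex -> vertex) :
  (forall u, adjacent u (M u)) -> involutive M -> False.
Proof.
move=> adjM MK.
have [i0 M_hub] : exists i0, M None = Some (i0, None).
  by have := adjM None; case: (M None) => [[i0 [x|]]|] //= _; exists i0.
pose i1 : 'I_m.*2.+1 := if i0 == ord0 then ord_max else ord0.
have i10 : i1 != i0.
  rewrite /i1; case: (eqVneq i0 ord0) => [->|]; last by rewrite eq_sym.
  by rewrite -(inj_eq val_inj) /= -lt0n double_gt0.
pose B := [set Some (i1, o) | o : option gadget].
have [v _ Mv] : exists2 v, v \in B & M v = v.
  apply: involution_fixpoint => [_ /imsetP[o _ ->]|v _|]; last 1 first.
  - rewrite card_imset; last by move=> o o' [].
    by rewrite !(card_option, card_prod, card_bool, card_ord) mul2n /= odd_double.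
  - have := adjM (Some (i1, o)); case Mo: (M (Some (i1, o))) => [[i o']|] /=.
      by case/andP => /eqP <- _; apply/imsetP; exists o'.
    by have := MK (Some (i1, o)); rewrite Mo M_hub => -[i0E]; rewrite i0E eqxx in i10.
  - exact: MK.
by have := adjM v; rewrite Mv adjacent_irr.
Qed.

End OddRegularGraph.

Theorem propositionA (k : nat) :
  3 <= k -> odd k ->
  exists (V : finType) (adj : rel V),
    0 < #|V| /\ symmetric adj /\ irreflexive adj /\
    (forall v : V, #|[set w | adj v w]| = k) /\
    (forall u v : V, connect adj u v) /\
    (forall (G : Type) (mul : G -> G -> G) (e : G) (inv : G -> G),
       is_group mul e inv ->
       forall H : G -> Prop, is_subgroup mul e inv H ->
       forall S : G -> Prop, (forall s, S s -> S (inv s)) -> ~ S e ->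
         generates mul e inv S ->
         ~ schreier_iso mul inv H S adj).
Proof.
move=> k_ge3 k_odd; have [m kE] : exists m, k = m.*2.+1.
  by exists k./2; rewrite -[LHS]odd_double_half k_odd.
subst k; have m_gt0 : 0 < m by case: m k_ge3 {k_odd}.
exists (vertex m), (@adjacent m); split; first by rewrite card_option.
do 4?split; [exact: adjacent_sym | exact: adjacent_irr | exact: adjacent_degree |
  exact: adjacent_connect |].
move=> G mul e inv G_group H H_subgroup S S_sym _ _ iso.
have [|M [adjM MK]] := schreier_odd_degree_matching G_group H_subgroup (c := None) S_sym
  (@adjacent_sym m) (@adjacent_irr m) iso.
  by rewrite adjacent_degree /= odd_double.
exact: (no_perfect_matching m_gt0 adjM MK).
Qed.
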